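(* Let $(X,\mathcal{Q},H)$ be a Diophantine space and let $K\subseteq X$ have the automorphism property. Suppose that for every $Q > 0$, the set $\{r\in\mathcal{Q} : H(r)\leq Q\}$ intersects each ball of $X$ in only finitely many points. Fix $(a,A)\in\mathbb{R}^2$, and suppose that $K$ is not uniformly $\kappa\Psi_{a,A}$-approximable for any $\kappa > 0$. Then the set $\{x\in X : x\text{ is not }\kappa\Psi_{a,A}\text{-approximable for any }\kappa > 0\}$ is comeager in $X$.
   Context: A Diophantine space is a triple $(X,\mathcal{Q},H)$ where $X$ is a complete metric space (with metric $\mathrm{dist}$), $\mathcal{Q}\subseteq X$ is a dense subset, and $H:\mathcal{Q}\to(0,\infty)$ (the height function). An automorphism of $(X,\mathcal{Q},H)$ is a bi-Lipschitz map $\Phi:X\to X$ with $\Phi(\mathcal{Q})=\mathcal{Q}$ such that there is a constant $C\geq 1$ with $C^{-1}H(r)\leq H(\Phi(r))\leq C H(r)$ for all $r\in\mathcal{Q}$. A set $K\subseteq X$ has the automorphism property if for every nonempty open $B\subseteq X$ there is an automorphism $\Phi$ with $\Phi(K)\subseteq B$. For a function $\Psi:(0,\infty)\times\mathbb{N}\to(0,\infty)$ and $Q_0\in\mathbb{N}$, a point $x\in X$ is $(\Psi,Q_0)$-approximable if for every integer $Q\geq Q_0$ there exists $r\in\mathcal{Q}$ with $H(r)\leq Q$ and $\mathrm{dist}(x,r)<\Psi(H(r),Q)$; $x$ is $\Psi$-approximable if it is $(\Psi,Q_0)$-approximable for some $Q_0$; a set $S$ is uniformly $\Psi$-approximable if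 there is a single $Q_0$ such that every point of $S$ is $(\Psi,Q_0)$-approximable. Here $\kappa\Psi_{a,A}(q,Q)=\kappa q^{-a}Q^{-A}$. *)

From Stdlib Require Import Reals List.
Open Scope R_scope.

Section Diophantine.
Context {X : Type}.

Definition is_metric (dist : X -> X -> R) : Prop :=
  (forall x y, 0 <= dist x y) /\
  (forall x y, dist x y = 0 <-> x = y) /\
  (forall x y, dist x y = dist y x) /\
  (forall x y z, dist x z <= dist x y + dist y z).

Definition cauchy_seq (dist : X -> X -> R) (u : nat -> X) : Prop :=
  forall eps, 0 < eps -> exists N, forall m n, (N <= m)%nat -> (N <= n)%nat ->
    dist (u m) (u n) < eps.

Definition converges_to (dist : X -> X -> R) (u : nat -> X) (l : X) : Prop :=
  forall eps, 0 < eps -> exists N, forall n, (N <= n)%nat -> dist (u n) l < eps.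

Definition is_complete (dist : X -> X -> R) : Prop :=
  forall u, cauchy_seq dist u -> exists l, converges_to dist u l.

Definition ball (dist : X -> X -> R) (x : X) (rho : R) : X -> Prop :=
  fun y => dist x y < rho.

Definition is_open (dist : X -> X -> R) (U : X -> Prop) : Prop :=
  forall x, U x -> exists rho, 0 < rho /\ forall y, ball dist x rho y -> U y.

Definition is_dense (dist : X -> X -> R) (S : X -> Prop) : Prop :=
  forall x eps, 0 < eps -> exists s, S s /\ dist x s < eps.

Definition comeager (dist : X -> X -> R) (S : X -> Prop) : Prop :=
  exists U : nat -> (X -> Prop),
    (forall n, is_open dist (U n) /\ is_dense dist (U n)) /\
    (forall x, (forall n, U n x) -> S x).

Definition bi_lipschitz (dist : X -> X -> R) (Phi : X -> X) : Prop :=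
  exists L, 1 <= L /\ forall x y,
    dist x y / L <= dist (Phi x) (Phi y) /\ dist (Phi x) (Phi y) <= L * dist x y.

Definition automorphism (dist : X -> X -> R) (Qs : X -> Prop) (H : X -> R)
    (Phi : X -> X) : Prop :=
  bi_lipschitz dist Phi /\
  (forall r, Qs r -> Qs (Phi r)) /\
  (forall r, Qs r -> exists s, Qs s /\ Phi s = r) /\
  exists C, 1 <= C /\ forall r, Qs r -> H r / C <= H (Phi r) /\ H (Phi r) <= C * H r.

Definition automorphism_property (dist : X -> X -> R) (Qs : X -> Prop) (H : X -> R)
    (K : X -> Prop) : Prop :=
  forall B : X -> Prop, is_open dist B -> (exists x, B x) ->
    exists Phi, automorphism dist Qs H Phi /\ forall x, K x -> B (Phi x).

(* (Psi, Q0)-approximability; N = {1,2,...}, so Q0 >= 1 *)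
Definition approx_Q0 (dist : X -> X -> R) (Qs : X -> Prop) (H : X -> R)
    (Psi : R -> nat -> R) (Q0 : nat) (x : X) : Prop :=
  forall Q : nat, (Q0 <= Q)%nat ->
    exists r, Qs r /\ H r <= INR Q /\ dist x r < Psi (H r) Q.

Definition approximable (dist : X -> X -> R) (Qs : X -> Prop) (H : X -> R)
    (Psi : R -> nat -> R) (x : X) : Prop :=
  exists Q0 : nat, (1 <= Q0)%nat /\ approx_Q0 dist Qs H Psi Q0 x.

Definition uniformly_approximable (dist : X -> X -> R) (Qs : X -> Prop) (H : X -> R)
    (Psi : R -> nat -> R) (S : X -> Prop) : Prop :=
  exists Q0 : nat, (1 <= Q0)%nat /\ forall x, S x -> approx_Q0 dist Qs H Psi Q0 x.

Definition finite_set (S : X -> Prop) : Prop :=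
  exists l : list X, forall x, S x -> In x l.

End Diophantine.

Definition kPsi (kappa a A : R) (q : R) (Q : nat) : R :=
  kappa * Rpower q (- a) * Rpower (INR Q) (- A).

(** Let U_n be the set of points having a neighbourhood all of whose points stay
    at distance at least (n+1)·Psi_{a,A}(H(r), Q) from every r of height at most
    Q, for a single level Q > n.  Each U_n is open, and a point lying in every
    U_n is not kappa·Psi_{a,A}-approximable for any kappa.  For density, push
    K into a given ball by an automorphism Phi.  Since K is not uniformly
    approximable with a large constant, some z in K avoids all rationals of
    height at most Q at a level Q beyond any prescribed bound; the bi-Lipschitz
    and height distortion of Phi cost only constant factors, so Phi z avoids
    all rationals of height at most Q/N with constant 2(n+1).  As only finitely
    many such rationals lie near Phi z, a whole ball around Phi z lies in U_n. *)

From Stdlib Require Import Reals List.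
From Stdlib Require Import Lra Lia Classical.
Open Scope R_scope.

Lemma Rpower_ratio_bound (x y k b : R) :
  0 < x -> 0 < y -> 1 <= k -> x / k <= y -> y <= k * x ->
  Rpower y b * Rpower k (- Rabs b) <= Rpower x b.
Proof.
  intros Hx Hy Hk Hxy Hyx. unfold Rpower. rewrite <- exp_plus.
  apply Rnot_lt_le; intro Hlt; apply exp_lt_inv in Hlt.
  assert (Hy_up : ln y <= ln k + ln x).
  { rewrite <- ln_mult by lra. apply Rnot_lt_le; intro h; apply ln_lt_inv in h; lra. }
  assert (Hx_ky : x <= k * y).
  { replace x with (k * (x / k)) by (field; lra). apply Rmult_le_compat_l; lra. }
  assert (Hy_low : ln x <= ln k + ln y).
  { rewrite <- ln_mult by lra. apply Rnot_lt_le; intro h; apply ln_lt_inv in h; lra. }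
  assert (Hk_ln : 0 <= ln k).
  { rewrite <- ln_1. apply Rnot_lt_le; intro h; apply ln_lt_inv in h; lra. }
  destruct (Rle_or_lt 0 b).
  - rewrite Rabs_right in Hlt by lra. nra.
  - rewrite Rabs_left in Hlt by lra. nra.
Qed.

Lemma kPsi_pos (kappa a A q : R) (Q : nat) : 0 < kappa -> 0 < kPsi kappa a A q Q.
Proof.
  intro Hk. unfold kPsi, Rpower.
  pose proof (exp_pos (- a * ln q)). pose proof (exp_pos (- A * ln (INR Q))).
  apply Rmult_lt_0_compat; [apply Rmult_lt_0_compat|]; assumption.
Qed.

Lemma kPsi_scale (c kappa a A q : R) (Q : nat) :
  kPsi (c * kappa) a A q Q = c * kPsi kappa a A q Q.
Proof. unfold kPsi; ring. Qed.

Lemma kPsi_le_kappa (kappa kappa' a A q : R) (Q : nat) :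
  kappa <= kappa' -> kPsi kappa a A q Q <= kPsi kappa' a A q Q.
Proof.
  intro Hk. unfold kPsi, Rpower.
  pose proof (exp_pos (- a * ln q)). pose proof (exp_pos (- A * ln (INR Q))).
  apply Rmult_le_compat_r; [lra|]. apply Rmult_le_compat_r; lra.
Qed.

Lemma kPsi_ratio_bound (kappa a A q q' C k : R) (Q Q' : nat) :
  0 <= kappa -> 0 < q -> 0 < q' -> 1 <= C -> q / C <= q' -> q' <= C * q ->
  0 < INR Q -> 0 < INR Q' -> 1 <= k -> INR Q / k <= INR Q' -> INR Q' <= k * INR Q ->
  kPsi (kappa * Rpower C (- Rabs a) * Rpower k (- Rabs A)) a A q' Q' <= kPsi kappa a A q Q.
Proof.
  intros Hk Hq Hq' HC Hq1 Hq2 HQ HQ' Hk1 HQ1 HQ2.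
  pose proof (Rpower_ratio_bound q q' C (- a) Hq Hq' HC Hq1 Hq2) as Hheight.
  pose proof (Rpower_ratio_bound (INR Q) (INR Q') k (- A) HQ HQ' Hk1 HQ1 HQ2) as Hlevel.
  rewrite Rabs_Ropp in Hheight, Hlevel.
  unfold kPsi.
  assert (0 < Rpower q' (- a) * Rpower C (- Rabs a)) by (unfold Rpower; apply Rmult_lt_0_compat; apply exp_pos).
  assert (0 < Rpower (INR Q') (- A) * Rpower k (- Rabs A)) by (unfold Rpower; apply Rmult_lt_0_compat; apply exp_pos).
  replace (kappa * Rpower C (- Rabs a) * Rpower k (- Rabs A) * Rpower q' (- a) * Rpower (INR Q') (- A))
    with (kappa * (Rpower q' (- a) * Rpower C (- Rabs a)) * (Rpower (INR Q') (- A) * Rpower k (- Rabs A)))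
    by ring.
  apply Rmult_le_compat; [apply Rmult_le_pos; lra | lra | | exact Hlevel].
  apply Rmult_le_compat_l; assumption.
Qed.

Lemma list_pos_lower_bound {T : Type} (f : T -> R) (l : list T) :
  (forall x, 0 < f x) -> exists delta, 0 < delta /\ forall x, In x l -> delta <= f x.
Proof.
  intro Hf. induction l as [|x l [delta [Hdelta Hl]]].
  - exists 1. split; [lra | intros x []].
  - exists (Rmin (f x) delta). split; [apply Rmin_glb_lt; auto|].
    intros y [<- | Hy]; [apply Rmin_l|].
    eapply Rle_trans; [apply Rmin_r | auto].
Qed.

Lemma exists_coarser_level (N n Q : nat) :
  (1 <= N)%nat -> (N * S n <= Q)%nat ->
  exists Q', (S n <= Q')%nat /\ (N * Q' <= Q)%nat /\ (Q <= 2 * N * Q')%nat.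
Proof.
  intros HN HQ. exists (Q / N)%nat.
  assert (Hlow : (S n <= Q / N)%nat) by (apply Nat.div_le_lower_bound; lia).
  pose proof (Nat.Div0.mul_div_le Q N).
  pose proof (Nat.mul_succ_div_gt Q N ltac:(lia)).
  repeat split; nia.
Qed.

Section Diophantine_space.

Variables (X : Type) (dist : X -> X -> R) (Qs : X -> Prop) (H : X -> R) (a A : R).

Hypothesis dist_refl : forall x, dist x x = 0.
Hypothesis dist_triangle : forall x y z, dist x z <= dist x y + dist y z.
Hypothesis height_pos : forall r, Qs r -> 0 < H r.

(* The negation of the condition of [approx_Q0] at the single level Q. *)
Definition avoids (kappa : R) (Q : nat) (y : X) : Prop :=
  forall r, Qs r -> H r <= INR Q -> kPsi kappa a A (H r) Q <= dist y r.

Definition avoiding_region (n : nat) (x : X) : Prop :=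
  exists Q, (S n <= Q)%nat /\ exists rho, 0 < rho /\
    forall y, dist x y < rho -> avoids (INR n + 1) Q y.

Lemma ball_open (x : X) (eps : R) : is_open dist (ball dist x eps).
Proof.
  intros y Hy. unfold ball in *. exists (eps - dist x y). split; [lra|].
  intros z Hz. pose proof (dist_triangle x y z). lra.
Qed.

Lemma avoiding_region_open (n : nat) : is_open dist (avoiding_region n).
Proof.
  intros x (Q & HQ & rho & Hrho & Havoid). exists (rho / 2). split; [lra|].
  intros y Hxy. unfold ball in Hxy. exists Q. split; [exact HQ|].
  exists (rho / 2). split; [lra|].
  intros z Hz. apply Havoid. pose proof (dist_triangle x y z). lra.
Qed.

Lemma not_uniformly_approximable_avoids (kappa : R) (K : X -> Prop) (Q0 : nat) :
  (1 <= Q0)%nat -> ~ uniformly_approximable dist Qs H (kPsi kappa a A) K ->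
  exists z Q, K z /\ (Q0 <= Q)%nat /\ avoids kappa Q z.
Proof.
  intros HQ0 Hnot. apply NNPP; intro Hnone. apply Hnot.
  exists Q0. split; [exact HQ0|]. intros z Kz Q HQ.
  apply NNPP; intro Hno_r. apply Hnone. exists z, Q. repeat split; auto.
  intros r Hr HrQ. apply Rnot_lt_le; intro Hclose. apply Hno_r. exists r; auto.
Qed.

(* Surjectivity of Phi on rationals is what lets every rational near Phi z be
   pulled back to one near z. *)
Lemma avoids_automorphism (kappa L C k : R) (Phi : X -> X) (z : X) (Q Q' : nat) :
  0 <= kappa -> 1 <= L -> (forall x y, dist x y / L <= dist (Phi x) (Phi y)) ->
  (forall r, Qs r -> exists s, Qs s /\ Phi s = r) ->
  1 <= C -> (forall r, Qs r -> H r / C <= H (Phi r) /\ H (Phi r) <= C * H r) ->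
  1 <= k -> 0 < INR Q' -> C * INR Q' <= INR Q -> INR Q <= k * INR Q' ->
  avoids kappa Q z ->
  avoids (kappa * Rpower C (- Rabs a) * Rpower k (- Rabs A) / L) Q' (Phi z).
Proof.
  intros Hkappa HL Hlip Hsurj HC Hheight Hk HQ' HQ'Q HQQ' Hz r Hr HrQ'.
  destruct (Hsurj r Hr) as (s & Hs & <-).
  destruct (Hheight s Hs) as [Hs_low Hs_up].
  pose proof (height_pos s Hs). pose proof (height_pos _ Hr).
  assert (Hs_C : H s <= C * H (Phi s)).
  { replace (H s) with (C * (H s / C)) by (field; lra). apply Rmult_le_compat_l; lra. }
  assert (Hfar : kPsi kappa a A (H s) Q <= dist z s).
  { apply Hz; [exact Hs|]. apply (Rle_trans _ (C * INR Q')); [|exact HQ'Q].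
    apply (Rle_trans _ _ _ Hs_C). apply Rmult_le_compat_l; lra. }
  assert (Hratio : kPsi (kappa * Rpower C (- Rabs a) * Rpower k (- Rabs A)) a A (H (Phi s)) Q'
                   <= kPsi kappa a A (H s) Q).
  { assert (HQ'_le : INR Q' <= INR Q) by nra.
    apply kPsi_ratio_bound; try nra.
    apply (Rmult_le_reg_r k); [lra|]. unfold Rdiv.
    rewrite Rmult_assoc, Rinv_l, Rmult_1_r by lra. lra. }
  unfold Rdiv. rewrite Rmult_comm, kPsi_scale.
  apply (Rle_trans _ (/ L * dist z s)).
  - apply Rmult_le_compat_l; [left; apply Rinv_0_lt_compat; lra | lra].
  - rewrite Rmult_comm. apply Hlip.
Qed.

(* Only finitely many rationals of height at most Q lie within distance 1 of y0;
   a radius below their Psi-values keeps them at bay, and the others are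
   already at distance at least 1. *)
Lemma avoids_near (kappa : R) (Q : nat) (y0 : X) :
  0 < kappa -> finite_set (fun r => Qs r /\ H r <= INR Q /\ ball dist y0 1 r) ->
  avoids (2 * kappa) Q y0 ->
  exists delta, 0 < delta /\ forall y, dist y0 y < delta -> avoids kappa Q y.
Proof.
  intros Hkappa [l Hl] Hy0.
  destruct (list_pos_lower_bound (fun r => kPsi kappa a A (H r) Q) l) as (delta & Hdelta & Hbound).
  { intro r. apply kPsi_pos, Hkappa. }
  exists (Rmin (1 / 2) delta). split; [apply Rmin_glb_lt; lra|].
  intros y Hy r Hr HrQ.
  pose proof (Hy0 r Hr HrQ) as Hfar. rewrite kPsi_scale in Hfar.
  pose proof (kPsi_pos kappa a A (H r) Q Hkappa).
  pose proof (dist_triangle y0 y r). pose proof (Rmin_l (1 / 2) delta).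
  destruct (Rlt_or_le (dist y0 r) 1) as [Hnear | Hfar1].
  - assert (delta <= kPsi kappa a A (H r) Q) by (apply Hbound, Hl; unfold ball; auto).
    pose proof (Rmin_r (1 / 2) delta). lra.
  - lra.
Qed.

Lemma avoiding_regions_not_approximable (x : X) :
  (forall n, avoiding_region n x) ->
  forall kappa, 0 < kappa -> ~ approximable dist Qs H (kPsi kappa a A) x.
Proof.
  intros Hx kappa Hkappa (Q0 & _ & Happrox).
  destruct (INR_archimed 1 kappa) as [M HM]; [lra|]. rewrite Rmult_1_r in HM.
  destruct (Hx (M + Q0)%nat) as (Q & HQ & rho & Hrho & Havoid).
  assert (Hxx : dist x x < rho) by (rewrite dist_refl; exact Hrho).
  destruct (Happrox Q ltac:(lia)) as (r & Hr & HrQ & Hclose).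
  pose proof (Havoid x Hxx r Hr HrQ) as Hfar.
  assert (kPsi kappa a A (H r) Q <= kPsi (INR (M + Q0) + 1) a A (H r) Q).
  { apply kPsi_le_kappa. rewrite plus_INR. pose proof (pos_INR Q0). lra. }
  lra.
Qed.

Variable K : X -> Prop.

Hypothesis K_automorphism : automorphism_property dist Qs H K.
Hypothesis height_locally_finite : forall Q, 0 < Q -> forall x rho, 0 < rho ->
  finite_set (fun r => Qs r /\ H r <= Q /\ ball dist x rho r).
Hypothesis K_not_uniform : forall kappa, 0 < kappa ->
  ~ uniformly_approximable dist Qs H (kPsi kappa a A) K.

Lemma avoiding_region_dense (n : nat) : is_dense dist (avoiding_region n).
Proof.
  intros x0 eps Heps.
  assert (Hball : exists x, ball dist x0 eps x) by (exists x0; unfold ball; rewrite dist_refl; exact Heps).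
  destruct (K_automorphism _ (ball_open x0 eps) Hball)
    as (Phi & ((L & HL & Hlip) & _ & Hsurj & (C & HC & Hheight)) & HK).
  destruct (INR_archimed 1 C) as [N HN]; [lra|]. rewrite Rmult_1_r in HN.
  assert (HN1 : (1 <= N)%nat) by (destruct N; [simpl in HN; lra | lia]).
  set (m := INR n + 1).
  assert (Hm : 0 < m) by (unfold m; pose proof (pos_INR n); lra).
  set (c := Rpower C (- Rabs a) * Rpower (2 * INR N) (- Rabs A)).
  assert (Hc : 0 < c) by (unfold c, Rpower; apply Rmult_lt_0_compat; apply exp_pos).
  (* chosen so that [avoids_automorphism] turns kappa into 2m *)
  set (kappa := 2 * m * L / c).
  assert (Hkappa : 0 < kappa) by (unfold kappa; apply Rdiv_lt_0_compat; nra).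
  destruct (not_uniformly_approximable_avoids kappa K (N * S n) ltac:(nia) (K_not_uniform kappa Hkappa))
    as (z & Q & Kz & HQ & Hz).
  destruct (exists_coarser_level N n Q HN1 HQ) as (Q' & HQ'n & HNQ' & HQN).
  apply le_INR in HQ'n, HNQ', HQN. rewrite S_INR in HQ'n.
  rewrite mult_INR in HNQ'. rewrite !mult_INR in HQN.
  replace (INR 2) with 2 in HQN by (simpl; lra).
  pose proof (pos_INR n).
  assert (Hy0 : avoids (2 * m) Q' (Phi z)).
  { assert (Hconst : kappa * Rpower C (- Rabs a) * Rpower (2 * INR N) (- Rabs A) / L = 2 * m).
    { replace (kappa * _ * _) with (kappa * c) by (unfold c; ring). unfold kappa; field; lra. }
    rewrite <- Hconst.
    apply (avoids_automorphism _ _ _ _ _ _ Q); try lra.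
    - intros x y. apply Hlip.
    - exact Hsurj.
    - exact Hheight.
    - apply (Rle_trans _ (INR N * INR Q')); [apply Rmult_le_compat_r|]; lra.
    - exact Hz. }
  destruct (avoids_near m Q' (Phi z) Hm (height_locally_finite (INR Q') ltac:(lra) (Phi z) 1 Rlt_0_1) Hy0)
    as (delta & Hdelta & Hnear).
  exists (Phi z). split; [|exact (HK z Kz)].
  exists Q'. split; [apply INR_le; rewrite S_INR; lra|]. exists delta. split; assumption.
Qed.

End Diophantine_space.

Theorem proposition1 (X : Type) (dist : X -> X -> R) (Qs : X -> Prop) (H : X -> R)
  (K : X -> Prop) (a A : R) :
  is_metric dist ->
  is_complete dist ->
  is_dense dist Qs ->
  (forall r, Qs r -> 0 < H r) ->
  automorphism_property dist Qs H K ->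
  (forall (Q : R), 0 < Q -> forall (x : X) (rho : R), 0 < rho ->
     finite_set (fun r => Qs r /\ H r <= Q /\ ball dist x rho r)) ->
  (forall kappa, 0 < kappa -> ~ uniformly_approximable dist Qs H (kPsi kappa a A) K) ->
  comeager dist
    (fun x => forall kappa, 0 < kappa -> ~ approximable dist Qs H (kPsi kappa a A) x).
Proof.
  intros (_ & Hdist_eq & _ & Htriangle) _ _ Hpos Haut Hfin Hnu.
  assert (Hrefl : forall x, dist x x = 0) by (intro x; apply Hdist_eq; reflexivity).
  exists (avoiding_region X dist Qs H a A). split.
  - intro n. split.
    + apply avoiding_region_open, Htriangle.
    + apply (avoiding_region_dense X dist Qs H a A Hrefl Htriangle Hpos K); assumption.
  - apply avoiding_regions_not_approximable, Hrefl.
Qed.
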